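(* Let $n\ge 1$ and let $P\in\mathbb{R}^{n\times n}$ be a row-stochastic matrix. Let $P_S:\{w\in\mathbb{R}^n: w_1+\dots+w_n=0\}\to\mathbb{R}^n$ denote the restriction of $P$ to the subspace of vectors with mean zero, and suppose $\|P_S\|<1$. Let $w\in\mathbb{R}^n$ be a global maximizer of $$L(w)=\langle w,Pw\rangle-\sum_{i=1}^n\log\Big(\sum_{j=1}^n\exp(w_iw_j)\Big)$$ over $\mathbb{R}^n$. If $$\left|\left\langle w,\frac{\mathbf{1}}{\sqrt n}\right\rangle\right|\le\frac{1-\|P_S\|}{3}\,\|w\|,$$ where $\mathbf{1}=(1,1,\dots,1)\in\mathbb{R}^n$, then $$\|w\|^2\le\frac{2n\log n}{1-\|P_S\|}.$$
   Context: A matrix is row-stochastic if its entries are non-negative and each row sums to $1$. $\|\cdot\|$ denotes the Euclidean norm on vectors and $\langle\cdot,\cdot\rangle$ the standard inner product; $\|P_S\|$ is the operator norm of $P_S$ with respect to the Euclidean norms on its domain (the mean-zero subspace) and on $\mathbb{R}^n$, i.e. $\|P_S\|=\sup\{\|Pu\|:\ u_1+\dots+u_n=0,\ \|u\|=1\}$. *)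

From HB Require Import structures.
From mathcomp Require Import all_boot all_order all_algebra.
From mathcomp Require Import all_classical all_reals all_analysis.
Set Implicit Arguments. Unset Strict Implicit. Unset Printing Implicit Defensive.
Import Order.TTheory GRing.Theory Num.Theory.
Local Open Scope ring_scope.
Local Open Scope classical_set_scope.

Section Defs.
Variables (R : realType) (n : nat).

Definition row_stochastic (P : 'M[R]_n) : Prop :=
  (forall i j, 0 <= P i j) /\ (forall i, \sum_(j < n) P i j = 1).

Definition dotv (u v : 'I_n -> R) : R := \sum_(i < n) u i * v i.

Definition enorm (u : 'I_n -> R) : R := Num.sqrt (dotv u u).

Definition matv (P : 'M[R]_n) (u : 'I_n -> R) : 'I_n -> R :=
  fun i => \sum_(j < n) P i j * u j.

(* operator norm of P restricted to the mean-zero subspace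
   (sup of the empty set is 0, the norm of the zero operator, when n = 1) *)
Definition opnormS (P : 'M[R]_n) : R :=
  sup [set r : R | exists u : 'I_n -> R,
         \sum_(i < n) u i = 0 /\ enorm u = 1 /\ r = enorm (matv P u)].

Definition Lobj (P : 'M[R]_n) (w : 'I_n -> R) : R :=
  dotv w (matv P w) - \sum_(i < n) ln (\sum_(j < n) expR (w i * w j)).

End Defs.

From HB Require Import structures.
From mathcomp Require Import all_boot all_order all_algebra.
From mathcomp Require Import all_classical all_reals all_analysis.
From mathcomp Require Import ring lra.
Set Implicit Arguments. Unset Strict Implicit.
Import Order.TTheory GRing.Theory Num.Theory.
Local Open Scope ring_scope.
Local Open Scope classical_set_scope.

(* Write [w = v + m 1] with [m] the mean of [w], so that [v] has mean zero.
   Since [P 1 = 1], [<w, P w> = <w, P v> + n m^2], and [<w, P v> <= ||P_S|| ||w||^2]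
   because [||P v|| <= ||P_S|| ||v|| <= ||P_S|| ||w||].  Keeping only the diagonal
   term of each inner sum, the log-partition term is at least [||w||^2].  Hence
   [L(w) <= (||P_S|| - 1) ||w||^2 + n m^2], and [n m^2 = <w, 1/sqrt n>^2] is at most
   [(1 - ||P_S||)^2/9 ||w||^2] by hypothesis.  Comparing with [L(0) = - n log n]
   gives the bound. *)

Section InnerProduct.
Variables (R : realType) (n : nat).
Implicit Types (u v w : 'I_n -> R).

Lemma dotvv_ge0 u : 0 <= dotv u u.
Proof. by apply: sumr_ge0 => i _; rewrite -expr2 sqr_ge0. Qed.

Lemma enorm_sqr u : enorm u ^+ 2 = dotv u u.
Proof. by rewrite /enorm sqr_sqrtr // dotvv_ge0. Qed.

Lemma sqr_le_dotvv u j : u j ^+ 2 <= dotv u u.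
Proof.
rewrite /dotv (bigD1 j) //= expr2 lerDl.
by apply: sumr_ge0 => i _; rewrite -expr2 sqr_ge0.
Qed.

Lemma dotvv_eq0 u : dotv u u = 0 -> forall j, u j = 0.
Proof.
move=> u0 j; apply/eqP; rewrite -sqrf_eq0 eq_le sqr_ge0 andbT.
by rewrite -u0 sqr_le_dotvv.
Qed.

Lemma dotv_scale u v r :
  dotv (fun i => u i / r) (fun i => v i / r) = dotv u v / r ^+ 2.
Proof. by rewrite /dotv mulr_suml; apply: eq_bigr => i _; rewrite expr2 invfM; ring. Qed.

(* Expand [0 <= sum_i (s u_i - v_i)^2]; this replaces Cauchy-Schwarz. *)
Lemma dotv_le_of_dotvv u v s : 0 <= s ->
  dotv v v <= s ^+ 2 * dotv u u -> dotv u v <= s * dotv u u.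
Proof.
move=> s_ge0 vu.
have [s0|s_neq0] := eqVneq s 0.
  move: vu; rewrite s0 expr0n mul0r /= => vv_le0.
  have v0 := dotvv_eq0 (le_anti (introT andP (conj vv_le0 (dotvv_ge0 v)))).
  by rewrite /dotv big1 // => i _; rewrite v0 mulr0.
have s_gt0 : 0 < s by rewrite lt_def s_neq0.
have sqr_sum : 0 <= s ^+ 2 * dotv u u - 2 * s * dotv u v + dotv v v.
  have -> : s ^+ 2 * dotv u u - 2 * s * dotv u v + dotv v v
            = \sum_(i < n) (s * u i - v i) ^+ 2.
    by rewrite /dotv !mulr_sumr -sumrB -big_split /=; apply: eq_bigr => i _; ring.
  by apply: sumr_ge0 => i _; exact: sqr_ge0.
have := dotvv_ge0 u; nra.
Qed.

End InnerProduct.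

Section Centering.
Variables (R : realType) (n : nat).
Implicit Types (w : 'I_n -> R) (P : 'M[R]_n).

Definition meanv w : R := (\sum_(i < n) w i) / n%:R.

Hypothesis n_gt0 : (0 < n)%N.

Let n_neq0 : n%:R != 0 :> R. Proof. by rewrite pnatr_eq0 -lt0n. Qed.

Lemma sum_meanv w : \sum_(i < n) w i = n%:R * meanv w.
Proof. by rewrite /meanv mulrC divfK. Qed.

Lemma sum_centered w : \sum_(i < n) (w i - meanv w) = 0.
Proof. by rewrite sumrB sumr_const card_ord -mulr_natl sum_meanv subrr. Qed.

Lemma dotv_centered w :
  dotv (fun i => w i - meanv w) (fun i => w i - meanv w)
  = dotv w w - n%:R * meanv w ^+ 2.
Proof.
rewrite /dotv (eq_bigr (fun i => w i * w i - 2 * meanv w * w i + meanv w ^+ 2));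
  last by move=> i _; ring.
by rewrite big_split sumrB /= -mulr_sumr (sum_meanv w) sumr_const card_ord -mulr_natl; ring.
Qed.

Lemma matv_shift P w k i : row_stochastic P ->
  matv P (fun j => w j + k) i = matv P w i + k.
Proof.
case=> _ P1; rewrite /matv.
under eq_bigr => j _ do rewrite mulrDr.
by rewrite big_split /= -mulr_suml P1 mul1r.
Qed.

Lemma dotv_matv_centered P w : row_stochastic P ->
  dotv w (matv P w)
  = dotv w (matv P (fun i => w i - meanv w)) + n%:R * meanv w ^+ 2.
Proof.
move=> sP.
have -> : matv P w = matv P (fun j => (w j - meanv w) + meanv w).
  by apply: funext => i; rewrite /matv; apply: eq_bigr => j _; rewrite subrK.
rewrite /dotv; under eq_bigr => i _ do rewrite matv_shift // mulrDr.
by rewrite big_split /= -mulr_suml (sum_meanv w) expr2 mulrA.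
Qed.

Lemma dotv_const_sqr w :
  dotv w (fun _ => 1 / Num.sqrt n%:R) ^+ 2 = n%:R * meanv w ^+ 2.
Proof.
have n_ge0 : 0 <= n%:R :> R by rewrite ler0n.
have sqrt_sqr : Num.sqrt n%:R ^+ 2 = n%:R :> R by rewrite sqr_sqrtr.
rewrite /dotv -mulr_suml (sum_meanv w) exprMn expr_div_n sqrt_sqr expr1n.
by field.
Qed.

End Centering.

Section OperatorNorm.
Variables (R : realType) (n : nat) (P : 'M[R]_n).
Implicit Types (u v : 'I_n -> R).
Hypothesis sP : row_stochastic P.

Lemma normr_matv_le u b : (forall j, `|u j| <= b) -> forall i, `|matv P u i| <= b.
Proof.
case: sP => P_ge0 P1 ub i.
rewrite -[b]mul1r -(P1 i) mulr_suml /matv.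
apply: le_trans (ler_norm_sum _ _ _) _; apply: ler_sum => j _.
by rewrite normrM ger0_norm // ler_wpM2l.
Qed.

Lemma dotvv_matv_le u : dotv u u = 1 -> dotv (matv P u) (matv P u) <= n%:R.
Proof.
move=> u1.
have u_le1 j : `|u j| <= 1.
  by rewrite -(ler_pXn2r (n := 2)) ?nnegrE // real_normK ?num_real // expr1n -u1 sqr_le_dotvv.
rewrite -[X in _ <= X%:R]card_ord -sumr_const; apply: ler_sum => i _.
rewrite -expr2 -real_normK ?num_real // -(expr1n _ 2).
by rewrite ler_pXn2r ?nnegrE // normr_matv_le.
Qed.

Let unit_images := [set r : R | exists u : 'I_n -> R,
  \sum_(i < n) u i = 0 /\ enorm u = 1 /\ r = enorm (matv P u)].

Lemma has_sup_unit_images : unit_images !=set0 -> has_sup unit_images.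
Proof.
move=> ne; split => //; exists (Num.sqrt n%:R) => _ [u [_ [u1 ->]]].
by rewrite ler_sqrt ?ler0n // dotvv_matv_le // -enorm_sqr u1 expr1n.
Qed.

Lemma enorm_matv_le_opnormS u : \sum_(i < n) u i = 0 -> enorm u = 1 ->
  enorm (matv P u) <= opnormS P.
Proof.
move=> u0 u1; apply: sup_upper_bound; last by exists u.
by apply: has_sup_unit_images; exists (enorm (matv P u)), u.
Qed.

Lemma opnormS_ge0 : 0 <= opnormS P.
Proof.
have [[r [u [u0 [u1 _]]]]|empty] := pselect (unit_images !=set0).
  exact: le_trans (sqrtr_ge0 _) (enorm_matv_le_opnormS u0 u1).
rewrite /opnormS -/unit_images.
suff -> : unit_images = set0 by rewrite sup0.
by apply/seteqP; split => // r ur; apply: empty; exists r.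
Qed.

Lemma dotvv_matv_le_opnormS v : \sum_(i < n) v i = 0 ->
  dotv (matv P v) (matv P v) <= opnormS P ^+ 2 * dotv v v.
Proof.
move=> v0.
have [vv0|vv_neq0] := eqVneq (dotv v v) 0.
  have -> : matv P v = fun _ => 0.
    by apply: funext => i; rewrite /matv big1 // => j _; rewrite (dotvv_eq0 vv0) mulr0.
  by rewrite vv0 mulr0 /dotv big1 // => i _; rewrite mulr0.
set r := enorm v.
have r_gt0 : 0 < r by rewrite sqrtr_gt0 lt_def vv_neq0 dotvv_ge0.
have r2 : r ^+ 2 = dotv v v by exact: enorm_sqr.
set u := fun i => v i / r.
have u0 : \sum_(i < n) u i = 0 by rewrite -mulr_suml v0 mul0r.
have u1 : enorm u = 1 by rewrite /enorm dotv_scale r2 divff // sqrtr1.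
have Pu : matv P u = fun i => matv P v i / r.
  by apply: funext => i; rewrite /matv mulr_suml; apply: eq_bigr => j _; rewrite mulrA.
have := enorm_matv_le_opnormS u0 u1.
rewrite -(ler_pXn2r (n := 2)) ?nnegrE ?sqrtr_ge0 ?opnormS_ge0 //.
by rewrite enorm_sqr Pu dotv_scale r2 ler_pdivrMr // lt_def vv_neq0 dotvv_ge0.
Qed.

End OperatorNorm.

Section Objective.
Variables (R : realType) (n : nat).
Implicit Types (w : 'I_n -> R) (P : 'M[R]_n).

Lemma Lobj0 P : Lobj P (fun _ => 0) = - (n%:R * ln (n%:R : R)).
Proof.
rewrite /Lobj /dotv big1 ?add0r; last by move=> i _; rewrite mul0r.
under eq_bigr => i _ do under eq_bigr => j _ do rewrite mul0r expR0.
by rewrite !sumr_const card_ord mulr_natl.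
Qed.

Lemma dotvv_le_sum_ln_sum_expR w :
  dotv w w <= \sum_(i < n) ln (\sum_(j < n) expR (w i * w j)).
Proof.
apply: ler_sum => i _.
have diag_le : expR (w i * w i) <= \sum_(j < n) expR (w i * w j).
  by rewrite (bigD1 i) //= lerDl; apply: sumr_ge0 => j _; exact: expR_ge0.
have sum_gt0 : 0 < \sum_(j < n) expR (w i * w j) := lt_le_trans (expR_gt0 _) diag_le.
by rewrite -ler_expR lnK // posrE.
Qed.

Lemma Lobj_le P w : (0 < n)%N -> row_stochastic P ->
  Lobj P w <= (opnormS P - 1) * dotv w w + n%:R * meanv w ^+ 2.
Proof.
move=> n_gt0 sP.
set v := fun i => w i - meanv w.
have v_le_w : dotv v v <= dotv w w.
  by rewrite dotv_centered // gerDl oppr_le0 mulr_ge0 ?ler0n ?sqr_ge0.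
have wPv_le : dotv w (matv P v) <= opnormS P * dotv w w.
  apply: dotv_le_of_dotvv (opnormS_ge0 sP) _.
  apply: le_trans (dotvv_matv_le_opnormS sP (sum_centered n_gt0 w)) _.
  by rewrite ler_wpM2l ?sqr_ge0.
have := dotvv_le_sum_ln_sum_expR w.
rewrite /Lobj dotv_matv_centered // -/v; lra.
Qed.

End Objective.

Theorem theorem3p3 (R : realType) (n : nat) (P : 'M[R]_n) (w : 'I_n -> R) :
  (0 < n)%N ->
  row_stochastic P ->
  opnormS P < 1 ->
  (forall v : 'I_n -> R, Lobj P v <= Lobj P w) ->
  `|dotv w (fun _ => 1 / Num.sqrt (n%:R))| <= (1 - opnormS P) / 3 * enorm w ->
  enorm w ^+ 2 <= 2 * n%:R * ln (n%:R : R) / (1 - opnormS P).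
Proof.
move=> n_gt0 sP s_lt1 w_max mean_small.
have L0_le_Lw := w_max (fun _ => 0); rewrite Lobj0 in L0_le_Lw.
have Lw_le := Lobj_le w n_gt0 sP.
set s := opnormS P in s_lt1 mean_small Lw_le *.
have s_ge0 : 0 <= s := opnormS_ge0 sP.
have mean_le : n%:R * meanv w ^+ 2 <= ((1 - s) / 3) ^+ 2 * dotv w w.
  have bound_ge0 : 0 <= (1 - s) / 3 * enorm w.
    by rewrite mulr_ge0 ?sqrtr_ge0 //; lra.
  rewrite -dotv_const_sqr // -enorm_sqr -exprMn -real_normK ?num_real //.
  by rewrite ler_pXn2r ?nnegrE.
rewrite ler_pdivlMr ?subr_gt0 // enorm_sqr.
have ww_ge0 := dotvv_ge0 w.
(* [(1 - s)^2 / 9 <= (1 - s) / 2] because [0 < 1 - s <= 1]. *)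
have : 0 <= dotv w w * (1 - s) * (1 - 2 * (1 - s) / 9).
  by rewrite !mulr_ge0 //; lra.
nra.
Qed.
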